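(* Let $\overline C,\underline C,V,\overline V$ be real numbers with $\overline C>\underline C>0$, $V>0$, $\overline V+V\le\overline C$ and $\underline C<\overline V<\underline C+V$. Let $$\mathcal P_2=\{(x_{t-1},x_t,y_{t-1},y_t)\in\mathbb R_+^2\times\{0,1\}^2:\ -x_i+\underline C y_i\le 0\ (i\in\{t-1,t\}),\ x_i-\overline C y_i\le 0\ (i\in\{t-1,t\}),$$ $$x_t-x_{t-1}\le Vy_{t-1}+\overline V(1-y_{t-1}),\ x_{t-1}-x_t\le Vy_t+\overline V(1-y_t)\},$$ and let $\mathcal Q_2$ be the set of $(x_{t-1},x_t,y_{t-1},y_t)\in\mathbb R^4$ satisfying $y_i\le 1$ and $\underline C y_i\le x_i\le\overline C y_i$ for $i\in\{t-1,t\}$; $x_{t-1}\le\overline V y_{t-1}+(\overline C-\overline V)y_t$; $x_t\le(\overline C-\overline V)y_{t-1}+\overline V y_t$; $x_t-x_{t-1}\le(\underline C+V)y_t-\underline C y_{t-1}$; $x_t-x_{t-1}\le\overline V y_t-(\overline V-V)y_{t-1}$; $x_{t-1}-x_t\le(\underline C+V)y_{t-1}-\underline C y_t$; $x_{t-1}-x_t\le\overline V y_{t-1}-(\overline V-V)y_t$. Then $\mathcal Q_2$ equals the convex hull of $\mathcal P_2$.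
   Context: Here $x_{t-1},x_t,y_{t-1},y_t$ are just the names of four real coordinates (generation amounts and on/off statuses of a generator in two consecutive periods); $\mathbb R_+$ denotes the nonnegative reals. *)

From Stdlib Require Import Reals List.
Open Scope R_scope.

(* A point (x_{t-1}, x_t, y_{t-1}, y_t) of R^4. *)
Record pt4 := Pt4 { xp : R; xc : R; yp : R; yc : R }.

Definition pt_add (p q : pt4) : pt4 :=
  Pt4 (xp p + xp q) (xc p + xc q) (yp p + yp q) (yc p + yc q).
Definition pt_scale (a : R) (p : pt4) : pt4 :=
  Pt4 (a * xp p) (a * xc p) (a * yp p) (a * yc p).
Definition pt_zero : pt4 := Pt4 0 0 0 0.

Definition wsum (l : list (R * pt4)) : pt4 :=
  fold_right (fun ap acc => pt_add (pt_scale (fst ap) (snd ap)) acc) pt_zero l.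
Definition wtotal (l : list (R * pt4)) : R :=
  fold_right (fun ap acc => fst ap + acc) 0 l.

Definition conv_hull (S : pt4 -> Prop) (z : pt4) : Prop :=
  exists l : list (R * pt4),
    Forall (fun ap => 0 <= fst ap /\ S (snd ap)) l /\
    wtotal l = 1 /\ z = wsum l.

Definition binary (y : R) : Prop := y = 0 \/ y = 1.

Definition P2 (Cup Clo V Vup : R) (p : pt4) : Prop :=
  let x1 := xp p in let x2 := xc p in let y1 := yp p in let y2 := yc p in
  0 <= x1 /\ 0 <= x2 /\ binary y1 /\ binary y2 /\
  - x1 + Clo * y1 <= 0 /\ - x2 + Clo * y2 <= 0 /\
  x1 - Cup * y1 <= 0 /\ x2 - Cup * y2 <= 0 /\
  x2 - x1 <= V * y1 + Vup * (1 - y1) /\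
  x1 - x2 <= V * y2 + Vup * (1 - y2).

Definition Q2 (Cup Clo V Vup : R) (p : pt4) : Prop :=
  let x1 := xp p in let x2 := xc p in let y1 := yp p in let y2 := yc p in
  y1 <= 1 /\ y2 <= 1 /\
  Clo * y1 <= x1 /\ x1 <= Cup * y1 /\
  Clo * y2 <= x2 /\ x2 <= Cup * y2 /\
  x1 <= Vup * y1 + (Cup - Vup) * y2 /\
  x2 <= (Cup - Vup) * y1 + Vup * y2 /\
  x2 - x1 <= (Clo + V) * y2 - Clo * y1 /\
  x2 - x1 <= Vup * y2 - (Vup - V) * y1 /\
  x1 - x2 <= (Clo + V) * y1 - Clo * y2 /\
  x1 - x2 <= Vup * y1 - (Vup - V) * y2.

(* Replacing the bounds y <= 1 of Q2 by y <= w gives a convex cone in (w, p)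
   whose slice at w = 1 is Q2 and which contains P2, so conv P2 is contained in
   Q2.  Conversely, by the symmetry exchanging the periods we may assume
   y_{t-1} <= y_t; then a point of Q2 is the combination
     y_{t-1} (a1, a2, 1, 1) + (y_t - y_{t-1}) (0, b, 0, 1) + (1 - y_t) 0
   of an "on-on", a "start-up" and an "off-off" point of P2, where
   a1 = x_{t-1}/y_{t-1}, and the split x_t = y_{t-1} a2 + (y_t - y_{t-1}) b with
   |a2 - a1| <= V and Clo <= b <= Vup exists exactly because of the ramping
   inequalities of Q2. *)
From Stdlib Require Import Reals Lra Psatz List.
Open Scope R_scope.

Section ConvexHull.

Variable S : pt4 -> Prop.

Lemma conv_hull_in_cone (K : R -> pt4 -> Prop) :
  K 0 pt_zero ->
  (forall w1 w2 p q, K w1 p -> K w2 q -> K (w1 + w2) (pt_add p q)) ->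
  (forall a w p, 0 <= a -> K w p -> K (a * w) (pt_scale a p)) ->
  (forall p, S p -> K 1 p) ->
  forall p, conv_hull S p -> K 1 p.
Proof.
  intros K0 Kadd Kscale SK p [l [Hl [Htot ->]]].
  rewrite <- Htot; clear Htot.
  induction Hl as [|[a q] l [Ha Hq] _ IH]; simpl; [exact K0|].
  apply Kadd; [|exact IH].
  rewrite <- (Rmult_1_r a) at 1; apply Kscale; auto.
Qed.

Lemma conv_hull_image (T : pt4 -> Prop) (f : pt4 -> pt4) :
  f pt_zero = pt_zero ->
  (forall p q, f (pt_add p q) = pt_add (f p) (f q)) ->
  (forall a p, f (pt_scale a p) = pt_scale a (f p)) ->
  (forall q, S q -> T (f q)) ->
  forall p, conv_hull S p -> conv_hull T (f p).
Proof.
  intros f0 fadd fscale ST p [l [Hl [Htot ->]]].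
  exists (map (fun ap => (fst ap, f (snd ap))) l); split; [|split].
  - rewrite Forall_map; eapply Forall_impl; [|exact Hl].
    intros ap [? ?]; simpl; auto.
  - rewrite <- Htot; clear Hl Htot.
    induction l as [|ap l IH]; simpl; congruence.
  - clear Hl Htot.
    induction l as [|ap l IH]; simpl; [now rewrite f0|].
    now rewrite fadd, fscale, IH.
Qed.

Lemma conv_hull_three (a b c : pt4) (wa wb wc : R) :
  0 <= wa -> 0 <= wb -> 0 <= wc -> wa + wb + wc = 1 -> S a -> S b -> S c ->
  conv_hull S (pt_add (pt_scale wa a) (pt_add (pt_scale wb b) (pt_scale wc c))).
Proof.
  intros. exists ((wa, a) :: (wb, b) :: (wc, c) :: nil); split; [|split].
  - repeat apply Forall_cons; auto.
  - simpl; lra.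
  - unfold wsum, pt_add, pt_scale, pt_zero; simpl; f_equal; ring.
Qed.

End ConvexHull.

Definition swap (p : pt4) : pt4 := Pt4 (xc p) (xp p) (yc p) (yp p).

Lemma swapK (p : pt4) : swap (swap p) = p.
Proof. now destruct p. Qed.

Lemma conv_hull_swap (S : pt4 -> Prop) :
  (forall q, S q -> S (swap q)) ->
  forall p, conv_hull S (swap p) -> conv_hull S p.
Proof.
  intros HS p Hp. rewrite <- (swapK p).
  apply (conv_hull_image S S swap); auto.
Qed.

Lemma weighted_sum_split (u v Alo Ahi Blo Bhi s : R) :
  0 <= u -> 0 <= v -> Alo <= Ahi -> Blo <= Bhi ->
  u * Alo + v * Blo <= s <= u * Ahi + v * Bhi ->
  exists a b, Alo <= a <= Ahi /\ Blo <= b <= Bhi /\ s = u * a + v * b.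
Proof.
  intros Hu Hv HA HB Hs.
  set (Lo := u * Alo + v * Blo) in Hs; set (Hi := u * Ahi + v * Bhi) in Hs.
  destruct (Req_dec Lo Hi) as [Heq|Hneq].
  - exists Alo, Blo; unfold Lo in *; lra.
  - (* move both endpoints by the same fraction [t] of their intervals *)
    set (t := (s - Lo) / (Hi - Lo)).
    assert (Es : s = Lo + t * (Hi - Lo)) by (unfold t; field; lra).
    assert (Ht : 0 <= t <= 1) by (clearbody t; unfold Lo, Hi in *; split; nra).
    exists (Alo + t * (Ahi - Alo)), (Blo + t * (Bhi - Blo)).
    rewrite Es; unfold Lo, Hi; repeat split; nra.
Qed.

Lemma factor_scaled_interval (lo hi x y : R) :
  0 <= y -> lo <= hi -> lo * y <= x <= hi * y ->
  exists a, lo <= a <= hi /\ x = y * a.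
Proof.
  intros Hy Hlh Hx.
  destruct (Req_dec y 0) as [->|Hy0].
  - exists lo; lra.
  - exists (x / y); split; [split|field; lra].
    + apply Rmult_le_reg_r with y; [lra|]. field_simplify; lra.
    + apply Rmult_le_reg_r with y; [lra|]. field_simplify; lra.
Qed.

Section Q2_hull.

Variables Cup Clo V Vup : R.
Hypotheses (HCup : Cup > Clo) (HClo : Clo > 0) (HV : V > 0)
  (HVupV : Vup + V <= Cup) (HCloVup : Clo < Vup) (HVupClo : Vup < Clo + V).

Definition Q2_cone (w : R) (p : pt4) : Prop :=
  let x1 := xp p in let x2 := xc p in let y1 := yp p in let y2 := yc p in
  y1 <= w /\ y2 <= w /\
  Clo * y1 <= x1 /\ x1 <= Cup * y1 /\
  Clo * y2 <= x2 /\ x2 <= Cup * y2 /\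
  x1 <= Vup * y1 + (Cup - Vup) * y2 /\
  x2 <= (Cup - Vup) * y1 + Vup * y2 /\
  x2 - x1 <= (Clo + V) * y2 - Clo * y1 /\
  x2 - x1 <= Vup * y2 - (Vup - V) * y1 /\
  x1 - x2 <= (Clo + V) * y1 - Clo * y2 /\
  x1 - x2 <= Vup * y1 - (Vup - V) * y2.

Lemma Q2_cone_zero : Q2_cone 0 pt_zero.
Proof. unfold Q2_cone; simpl; lra. Qed.

Lemma Q2_cone_add w1 w2 p q :
  Q2_cone w1 p -> Q2_cone w2 q -> Q2_cone (w1 + w2) (pt_add p q).
Proof. destruct p, q; unfold Q2_cone; simpl; lra. Qed.

Lemma Q2_cone_scale a w p :
  0 <= a -> Q2_cone w p -> Q2_cone (a * w) (pt_scale a p).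
Proof.
  destruct p; unfold Q2_cone; simpl.
  intros Ha (H1&H2&H3&H4&H5&H6&H7&H8&H9&H10&H11&H12); repeat split; nra.
Qed.

Lemma P2_Q2_cone p : P2 Cup Clo V Vup p -> Q2_cone 1 p.
Proof.
  destruct p; unfold P2, Q2_cone, binary; simpl.
  intros (_ & _ & [-> | ->] & [-> | ->] & H); lra.
Qed.

Lemma conv_hull_P2_Q2 p : conv_hull (P2 Cup Clo V Vup) p -> Q2 Cup Clo V Vup p.
Proof.
  intro Hp.
  exact (conv_hull_in_cone _ Q2_cone Q2_cone_zero Q2_cone_add Q2_cone_scale
           P2_Q2_cone p Hp).
Qed.

Lemma P2_swap q : P2 Cup Clo V Vup q -> P2 Cup Clo V Vup (swap q).
Proof. destruct q; unfold P2; simpl; tauto. Qed.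

Lemma Q2_swap p : Q2 Cup Clo V Vup p -> Q2 Cup Clo V Vup (swap p).
Proof. destruct p; unfold Q2; simpl; lra. Qed.

Lemma P2_on_on a1 a2 :
  Clo <= a1 <= Cup -> Clo <= a2 <= Cup -> a1 - V <= a2 <= a1 + V ->
  P2 Cup Clo V Vup (Pt4 a1 a2 1 1).
Proof. unfold P2, binary; simpl; lra. Qed.

Lemma P2_startup b : Clo <= b <= Vup -> P2 Cup Clo V Vup (Pt4 0 b 0 1).
Proof. unfold P2, binary; simpl; lra. Qed.

Lemma P2_off_off : P2 Cup Clo V Vup pt_zero.
Proof. unfold P2, binary, pt_zero; simpl; lra. Qed.

Lemma Q2_conv_hull_P2_ordered p :
  Q2 Cup Clo V Vup p -> yp p <= yc p -> conv_hull (P2 Cup Clo V Vup) p.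
Proof.
  destruct p as [x1 x2 y1 y2]; unfold Q2; simpl.
  intros (H1&H2&H3&H4&H5&H6&H7&H8&H9&H10&H11&H12) Hy.
  assert (Hy1 : 0 <= y1) by nra.
  destruct (factor_scaled_interval Clo Cup x1 y1) as [a1 [Ha1 ->]]; try lra.
  set (lo := Rmax Clo (a1 - V)); set (hi := Rmin Cup (a1 + V)).
  assert (Hlo : Clo <= lo /\ a1 - V <= lo) by (split; [apply Rmax_l|apply Rmax_r]).
  assert (Hhi : hi <= Cup /\ hi <= a1 + V) by (split; [apply Rmin_l|apply Rmin_r]).
  destruct (weighted_sum_split y1 (y2 - y1) lo hi Clo Vup x2)
    as [a2 [b [Ha2 [Hb ->]]]]; try lra.
  - unfold lo, hi; apply Rmax_lub; apply Rmin_glb; lra.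
  - unfold lo, hi; split.
    + apply Rmax_case_strong; intros; nra.
    + apply Rmin_case_strong; intros; nra.
  - replace (Pt4 (y1 * a1) (y1 * a2 + (y2 - y1) * b) y1 y2) with
      (pt_add (pt_scale y1 (Pt4 a1 a2 1 1))
         (pt_add (pt_scale (y2 - y1) (Pt4 0 b 0 1)) (pt_scale (1 - y2) pt_zero)))
      by (unfold pt_add, pt_scale, pt_zero; simpl; f_equal; ring).
    apply conv_hull_three; try lra.
    + apply P2_on_on; lra.
    + apply P2_startup; lra.
    + apply P2_off_off.
Qed.

End Q2_hull.

Theorem theorem1 (Cup Clo V Vup : R) :
  Cup > Clo -> Clo > 0 -> V > 0 -> Vup + V <= Cup ->
  Clo < Vup -> Vup < Clo + V ->
  forall p : pt4, Q2 Cup Clo V Vup p <-> conv_hull (P2 Cup Clo V Vup) p.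
Proof.
  intros HCup HClo HV HVupV HCloVup HVupClo p; split.
  - intro HQ.
    destruct (Rle_dec (yp p) (yc p)) as [Hy|Hy].
    + now apply Q2_conv_hull_P2_ordered.
    + apply conv_hull_swap; [apply P2_swap|].
      apply Q2_conv_hull_P2_ordered; [auto..| |].
      * now apply Q2_swap.
      * destruct p; simpl in *; lra.
  - now apply conv_hull_P2_Q2.
Qed.
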